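(* Let $(g_n)_{n\ge 0}$ be a sequence of positive real numbers (not depending on $a$) and, for $a>0$, let \[ g(a,x)=\sum_{n=0}^{\infty} g_n\Gamma(a+n)x^n \] (a formal power series in $x$), where $\Gamma$ is Euler's gamma function. Let $b>a>0$ and $\delta>0$, and write \[ \psi_{a,b,\delta}(x)=g(a+\delta,x)g(b,x)-g(b+\delta,x)g(a,x)=\sum_{m=0}^{\infty}\psi_m x^m . \] Then $\psi_m<0$ for all $m\ge0$, so that $a\mapsto g(a,x)$ is strictly log-convex for $x>0$.
   Context: Power series are understood formally; the log-convexity statement refers to values $x>0$ at which the series converge. *)

From Stdlib Require Import Reals.
From Coquelicot Require Import Coquelicot.
Open Scope R_scope.

Definition Gamma (a : R) : R :=
  RInt_gen (fun t => Rpower t (a - 1) * exp (- t))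
           (at_right 0) (Rbar_locally p_infty).

(* n-th coefficient of the formal power series g(a,x) = sum_n g_n Gamma(a+n) x^n *)
Definition gcoef (g : nat -> R) (a : R) (n : nat) : R := g n * Gamma (a + INR n).

Definition cauchy_coef (u v : nat -> R) (m : nat) : R :=
  sum_f_R0 (fun k => u k * v (m - k)%nat) m.

Definition psi_coef (g : nat -> R) (a b d : R) (m : nat) : R :=
  cauchy_coef (gcoef g (a + d)) (gcoef g b) m
  - cauchy_coef (gcoef g (b + d)) (gcoef g a) m.

(* value of the series g(a,x) (meaningful where it converges) *)
Definition gval (g : nat -> R) (a x : R) : R :=
  Series (fun n => gcoef g a n * x ^ n).

From Stdlib Require Import Reals Lra Psatz FunctionalExtensionality.
From Coquelicot Require Import Coquelicot.
Open Scope R_scope.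

(* Gamma is strictly log-convex on (0, +oo): integrating the strict convexity of exp against
   the Gamma integrands (pointwise Hoelder), with strictness because the two integrands being
   compared differ away from a single point.  Log-convexity makes Gamma (a + h) / Gamma a
   increasing in a.  Pairing the terms k and m - k of the Cauchy products in psi_m, this yields
   for the two products x1, x2 on the left and y1, y2 on the right both x1 x2 < y1 y2 and
   x1, x2 <= y2, whence x1 + x2 < y1 + y2 and psi_m < 0.  Log-convexity of a |-> g(a, x) follows
   since, again by Hoelder, a convergent sum of positive strictly log-convex functions is
   strictly log-convex. *)

Lemma Rabs_RInt_swap (f : R -> R) (a b : R) :
  ex_RInt f a b -> Rabs (RInt f b a) = Rabs (RInt f a b).
Proof.
  intros Hf. rewrite <- (opp_RInt_swap (V := R_CompleteNormedModule) f a b Hf).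
  apply Rabs_Ropp.
Qed.

Lemma RInt_Chasles_minus (f : R -> R) (a a' b b' : R) :
  ex_RInt f a' a -> ex_RInt f a b -> ex_RInt f b b' ->
  RInt f a' b' - RInt f a b = RInt f a' a + RInt f b b'.
Proof.
  intros H1 H2 H3.
  pose proof (RInt_Chasles (V := R_CompleteNormedModule) f a b b' H2 H3) as C1.
  pose proof (RInt_Chasles (V := R_CompleteNormedModule) f a' a b' H1
    (ex_RInt_Chasles (V := R_CompleteNormedModule) f a b b' H2 H3)) as C2.
  simpl in C1, C2. unfold plus in C1, C2; simpl in C1, C2. lra.
Qed.

Lemma Rabs_RInt_lt_wlog (f : R -> R) (P : R -> Prop) (eps : R) :
  (forall a a', P a -> P a' -> ex_RInt f a a') ->
  (forall a a', P a -> P a' -> a <= a' -> Rabs (RInt f a a') < eps) ->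
  forall a a', P a -> P a' -> Rabs (RInt f a a') < eps.
Proof.
  intros Hex Hle a a' Ha Ha'. destruct (Rle_dec a a') as [Haa | Haa].
  - now apply Hle.
  - rewrite <- Rabs_RInt_swap by auto. apply Hle; auto; lra.
Qed.

Lemma ex_RInt_gen_cauchy (f : R -> R) :
  (forall a b, 0 < a -> 0 < b -> ex_RInt f a b) ->
  (forall eps, 0 < eps -> exists d, 0 < d /\
     forall a a', 0 < a -> a <= a' -> a' < d -> Rabs (RInt f a a') < eps) ->
  (forall eps, 0 < eps -> exists M,
     forall b b', M < b -> b <= b' -> Rabs (RInt f b b') < eps) ->
  ex_RInt_gen f (at_right 0) (Rbar_locally p_infty).
Proof.
  intros Hex H0 Hinf.
  refine (proj1 (filterlimi_locally_cauchy
    (F := filter_prod (at_right 0) (Rbar_locally p_infty)) (U := R_CompleteSpace)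
    (fun ab y => is_RInt f (fst ab) (snd ab) y) _) _).
  - exists (fun a => 0 < a) (fun b => 0 < b).
    + exists (mkposreal 1 Rlt_0_1). intros; assumption.
    + exists 0. intros; lra.
    + intros a b Ha Hb. split.
      * exists (RInt f a b). now apply (RInt_correct (V := R_CompleteNormedModule)), Hex.
      * intros y1 y2 H1 H2. simpl in *.
        now rewrite <- (is_RInt_unique (V := R_CompleteNormedModule) _ _ _ _ H1),
          <- (is_RInt_unique (V := R_CompleteNormedModule) _ _ _ _ H2).
  - intros [eps Heps]; simpl.
    destruct (H0 (eps / 2)) as [d [Hd Hd']]; [lra |].
    destruct (Hinf (eps / 2)) as [M HM]; [lra |].
    exists (fun u => (0 < fst u < d) /\ (Rmax M 0 < snd u)). split.
    + exists (fun a => 0 < a < d) (fun b => Rmax M 0 < b).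
      * exists (mkposreal d Hd). intros y Hy Hy'. split; auto.
        apply Rabs_lt_between' in Hy. simpl in Hy. lra.
      * exists (Rmax M 0). auto.
      * intros x y Hx Hy; simpl; tauto.
    + intros [a b] [a' b'] [[Ha Had] Hb] [[Ha' Had'] Hb'] u v Hu Hv. simpl in *.
      rewrite <- (is_RInt_unique (V := R_CompleteNormedModule) _ _ _ _ Hu),
        <- (is_RInt_unique (V := R_CompleteNormedModule) _ _ _ _ Hv).
      change (Rabs (RInt f a' b' - RInt f a b) < eps).
      pose proof (Rmax_l M 0). pose proof (Rmax_r M 0).
      rewrite (RInt_Chasles_minus f a a' b b'); try (apply Hex; lra).
      assert (Rabs (RInt f a' a) < eps / 2).
      { apply (Rabs_RInt_lt_wlog f (fun x => 0 < x < d)); try tauto.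
        - intros x y Hx Hy. apply Hex; lra.
        - intros x y Hx Hy Hxy. apply Hd'; lra. }
      assert (Rabs (RInt f b b') < eps / 2).
      { apply (Rabs_RInt_lt_wlog f (fun x => Rmax M 0 < x)); auto.
        - intros x y Hx Hy. apply Hex; lra.
        - intros x y Hx Hy Hxy. apply HM; lra. }
      pose proof (Rabs_triang (RInt f a' a) (RInt f b b')). lra.
Qed.

Lemma is_RInt_gen_gt_0 (h : R -> R) (l c d : R) :
  is_RInt_gen h (at_right 0) (Rbar_locally p_infty) l ->
  (forall x, 0 < x -> 0 <= h x) -> 0 < c -> c < d ->
  (forall x, c <= x <= d -> continuous h x) -> (forall x, c < x < d -> 0 < h x) ->
  0 < l.
Proof.
  intros Hl Hnn Hc Hcd Hcont Hp.
  pose proof (RInt_gt_0 h c d Hcd Hp Hcont) as HI.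
  set (I := RInt h c d) in *.
  assert (Hnear := proj1 (filterlimi_locally
    (F := filter_prod (at_right 0) (Rbar_locally p_infty)) (U := R_UniformSpace) _ l)
    Hl (mkposreal (I / 2) ltac:(lra))).
  assert (Houter : filter_prod (at_right 0) (Rbar_locally p_infty)
                     (fun ab => 0 < fst ab < c /\ d < snd ab)).
  { exists (fun a => 0 < a < c) (fun b => d < b).
    - exists (mkposreal c Hc). intros y Hy Hy'. split; auto.
      apply Rabs_lt_between' in Hy. simpl in Hy. lra.
    - exists d. auto.
    - intros; simpl; auto. }
  destruct (Hierarchy.filter_ex _ (filter_and _ _ Hnear Houter))
    as [[a b] [[z [Hz Hball]] [[Ha Hac] Hdb]]].
  simpl in *. change (Rabs (z - l) < I / 2) in Hball.
  (* z = RInt h a b >= RInt h c d = I, since h >= 0 on the two outer pieces *)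
  assert (Eab : ex_RInt h a b) by (exists z; auto).
  assert (E1 : ex_RInt h a c)
    by (apply (ex_RInt_Chasles_1 (V := R_CompleteNormedModule)) with b; auto; lra).
  assert (E2 : ex_RInt h c b)
    by (apply (ex_RInt_Chasles_2 (V := R_CompleteNormedModule)) with a; auto; lra).
  assert (E3 : ex_RInt h c d)
    by (apply (ex_RInt_Chasles_1 (V := R_CompleteNormedModule)) with b; auto; lra).
  assert (E4 : ex_RInt h d b)
    by (apply (ex_RInt_Chasles_2 (V := R_CompleteNormedModule)) with c; auto; lra).
  pose proof (RInt_Chasles (V := R_CompleteNormedModule) h a c b E1 E2) as C1.
  pose proof (RInt_Chasles (V := R_CompleteNormedModule) h c d b E3 E4) as C2.
  simpl in C1, C2. unfold plus in C1, C2; simpl in C1, C2.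
  rewrite (is_RInt_unique (V := R_CompleteNormedModule) _ _ _ _ Hz) in C1.
  assert (0 <= RInt h a c) by (apply RInt_ge_0; auto; try lra; intros; apply Hnn; lra).
  assert (0 <= RInt h d b) by (apply RInt_ge_0; auto; try lra; intros; apply Hnn; lra).
  apply Rabs_lt_between' in Hball. fold I in C2. lra.
Qed.

Lemma RInt_le_antiderivative (f phi Phi : R -> R) (a b : R) :
  a <= b -> ex_RInt f a b ->
  (forall x, a <= x <= b -> is_derive Phi x (phi x)) ->
  (forall x, a <= x <= b -> continuous phi x) ->
  (forall x, a < x < b -> f x <= phi x) ->
  RInt f a b <= Phi b - Phi a.
Proof.
  intros Hab Hf HPhi Hphi Hle.
  assert (HI : is_RInt phi a b (minus (Phi b) (Phi a))).
  { apply (is_RInt_derive (V := R_CompleteNormedModule));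
      rewrite Rmin_left, Rmax_right by lra; auto. }
  change (Phi b - Phi a) with (minus (Phi b) (Phi a)).
  rewrite <- (is_RInt_unique (V := R_CompleteNormedModule) _ _ _ _ HI).
  apply RInt_le; auto. eexists; eauto.
Qed.

Definition gamma_integrand (s x : R) : R := Rpower x (s - 1) * exp (- x).

Lemma gamma_integrand_pos (s x : R) : 0 < gamma_integrand s x.
Proof. apply Rmult_lt_0_compat; apply exp_pos. Qed.

Lemma continuous_gamma_integrand (s x : R) : 0 < x -> continuous (gamma_integrand s) x.
Proof.
  intros Hx. apply (ex_derive_continuous (K := R_AbsRing) (V := R_NormedModule)).
  unfold gamma_integrand, Rpower. auto_derive. lra.
Qed.

Lemma ex_RInt_gamma_integrand (s a b : R) :
  0 < a -> 0 < b -> ex_RInt (gamma_integrand s) a b.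
Proof.
  intros Ha Hb. apply (ex_RInt_continuous (V := R_CompleteNormedModule)).
  intros x Hx. apply continuous_gamma_integrand.
  pose proof (Rmin_glb_lt a b 0 Ha Hb). lra.
Qed.

Lemma RInt_gamma_integrand_ge_0 (s a b : R) :
  0 < a -> a <= b -> 0 <= RInt (gamma_integrand s) a b.
Proof.
  intros Ha Hab. apply RInt_ge_0; auto.
  - apply ex_RInt_gamma_integrand; lra.
  - intros; left; apply gamma_integrand_pos.
Qed.

Lemma RInt_gamma_integrand_le_Rpower (s a b : R) : 0 < s -> 0 < a -> a <= b ->
  RInt (gamma_integrand s) a b <= Rpower b s / s.
Proof.
  intros Hs Ha Hab.
  assert (Hpow : forall x, a <= x <= b ->
            is_derive (fun y => Rpower y s / s) x (Rpower x (s - 1))).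
  { intros x Hx. apply is_derive_Reals.
    replace (Rpower x (s - 1)) with (s * Rpower x (s - 1) / s) by (field; lra).
    apply (derivable_pt_lim_div_scal (fun y => Rpower y s)), derivable_pt_lim_power. lra. }
  eapply Rle_trans.
  { apply (RInt_le_antiderivative _ (fun x => Rpower x (s - 1)) (fun y => Rpower y s / s));
      auto.
    - apply ex_RInt_gamma_integrand; lra.
    - intros x Hx. apply (ex_derive_continuous (K := R_AbsRing) (V := R_NormedModule)).
      unfold Rpower. auto_derive. lra.
    - intros x Hx. unfold gamma_integrand.
      rewrite <- (Rmult_1_r (Rpower x (s - 1))) at 2.
      apply Rmult_le_compat_l; [left; apply exp_pos |].
      rewrite <- exp_0. left; apply exp_increasing; lra. }
  enough (0 < Rpower a s / s) by lra.
  apply Rdiv_lt_0_compat; [apply exp_pos | lra].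
Qed.

Lemma gamma_integrand_le_exp_half (s : R) :
  exists C, 0 < C /\ forall x, 1 <= x -> gamma_integrand s x <= C * exp (- x / 2).
Proof.
  destruct (INR_archimed 1 (s - 1)) as [N HN]; [lra |].
  set (n := INR (S N)).
  assert (Hn : s - 1 <= n /\ 0 < n) by (unfold n; rewrite S_INR; pose proof (pos_INR N); lra).
  exists ((2 * n) ^ S N). split; [apply pow_lt; lra |].
  intros x Hx.
  (* x^n <= (2n)^n (exp (x/(2n)))^n = (2n)^n exp (x/2), using y <= exp y *)
  assert (Hpow : Rpower x (s - 1) <= (2 * n) ^ S N * exp (x / 2)).
  { apply Rle_trans with (x ^ S N).
    { rewrite <- Rpower_pow by lra. fold n. apply Rle_Rpower; lra. }
    replace (x ^ S N) with ((2 * n) ^ S N * (x / (2 * n)) ^ S N)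
      by (rewrite <- Rpow_mult_distr; f_equal; field; lra).
    replace (exp (x / 2)) with (exp (x / (2 * n)) ^ S N).
    2: { rewrite <- Rpower_pow by apply exp_pos. unfold Rpower. rewrite ln_exp.
         f_equal. fold n. field. lra. }
    apply Rmult_le_compat_l; [left; apply pow_lt; lra |].
    apply pow_incr. split.
    - left; apply Rdiv_lt_0_compat; lra.
    - pose proof (exp_ineq1_le (x / (2 * n))). lra. }
  unfold gamma_integrand.
  replace (exp (- x / 2)) with (exp (x / 2) * exp (- x))
    by (rewrite <- exp_plus; f_equal; field).
  rewrite <- Rmult_assoc. apply Rmult_le_compat_r; [left; apply exp_pos | exact Hpow].
Qed.

Lemma RInt_gamma_integrand_le_exp_half (s : R) :
  exists C, 0 < C /\ forall b b', 1 <= b -> b <= b' ->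
    RInt (gamma_integrand s) b b' <= 2 * C * exp (- b / 2).
Proof.
  destruct (gamma_integrand_le_exp_half s) as [C [HC Hle]].
  exists C. split; auto. intros b b' Hb Hbb'.
  eapply Rle_trans.
  { apply (RInt_le_antiderivative _ (fun y => C * exp (- y / 2))
                                    (fun y => -2 * C * exp (- y / 2))); auto.
    - apply ex_RInt_gamma_integrand; lra.
    - intros y _. auto_derive; auto. unfold Rdiv. field.
    - intros y _. apply (ex_derive_continuous (K := R_AbsRing) (V := R_NormedModule)).
      auto_derive. auto.
    - intros y Hy. apply Hle. lra. }
  pose proof (exp_pos (- b' / 2)). nra.
Qed.

Lemma ex_RInt_gen_gamma_integrand (s : R) : 0 < s ->
  ex_RInt_gen (gamma_integrand s) (at_right 0) (Rbar_locally p_infty).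
Proof.
  intros Hs. apply ex_RInt_gen_cauchy.
  - apply ex_RInt_gamma_integrand.
  - intros eps Heps. exists (Rpower (s * eps) (/ s)). split; [apply exp_pos |].
    intros a a' Ha Haa' Ha'.
    rewrite Rabs_pos_eq by (apply RInt_gamma_integrand_ge_0; auto).
    eapply Rle_lt_trans; [apply RInt_gamma_integrand_le_Rpower; auto |].
    pose proof (Rlt_Rpower_l a' _ s Hs (conj (Rlt_le_trans 0 a a' Ha Haa') Ha')) as Hpow.
    rewrite Rpower_mult, Rinv_l, Rpower_1 in Hpow by nra.
    apply (Rmult_lt_reg_r s); auto. unfold Rdiv. rewrite Rmult_assoc, Rinv_l; lra.
  - intros eps Heps.
    destruct (RInt_gamma_integrand_le_exp_half s) as [C [HC Htail]].
    exists (Rmax 1 (-2 * ln (eps / (2 * C)))). intros b b' Hb Hbb'.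
    pose proof (Rmax_l 1 (-2 * ln (eps / (2 * C)))).
    pose proof (Rmax_r 1 (-2 * ln (eps / (2 * C)))).
    rewrite Rabs_pos_eq by (apply RInt_gamma_integrand_ge_0; lra).
    eapply Rle_lt_trans; [apply Htail; lra |].
    assert (Hq : 0 < eps / (2 * C)) by (apply Rdiv_lt_0_compat; lra).
    assert (exp (- b / 2) < eps / (2 * C)).
    { rewrite <- (exp_ln (eps / (2 * C))) by auto. apply exp_increasing. lra. }
    replace eps with (2 * C * (eps / (2 * C))) by (field; lra).
    apply Rmult_lt_compat_l; lra.
Qed.

Lemma is_RInt_gen_Gamma (s : R) : 0 < s ->
  is_RInt_gen (gamma_integrand s) (at_right 0) (Rbar_locally p_infty) (Gamma s).
Proof.
  intros Hs. apply (RInt_gen_correct (V := R_CompleteNormedModule)).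
  now apply ex_RInt_gen_gamma_integrand.
Qed.

Lemma Gamma_pos (s : R) : 0 < s -> 0 < Gamma s.
Proof.
  intros Hs. apply (is_RInt_gen_gt_0 (gamma_integrand s) _ 1 2); try lra.
  - now apply is_RInt_gen_Gamma.
  - intros; left; apply gamma_integrand_pos.
  - intros; apply continuous_gamma_integrand; lra.
  - intros; apply gamma_integrand_pos.
Qed.

Lemma exp_convex_lt (t X Y : R) : 0 < t < 1 -> X <> Y ->
  exp (t * X + (1 - t) * Y) < t * exp X + (1 - t) * exp Y.
Proof.
  intros Ht HXY. set (M := t * X + (1 - t) * Y).
  (* tangent line of exp at M: exp z >= exp M * (1 + (z - M)), strictly for z <> M *)
  assert (HX : exp M * (1 + (X - M)) < exp X).
  { replace (exp X) with (exp M * exp (X - M)) by (rewrite <- exp_plus; f_equal; ring).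
    apply Rmult_lt_compat_l; [apply exp_pos |]. apply exp_ineq1.
    unfold M. intro E. apply HXY. nra. }
  assert (HY : exp M * (1 + (Y - M)) <= exp Y).
  { replace (exp Y) with (exp M * exp (Y - M)) by (rewrite <- exp_plus; f_equal; ring).
    apply Rmult_le_compat_l; [left; apply exp_pos | apply exp_ineq1_le]. }
  assert (Hsum : t * (exp M * (1 + (X - M))) + (1 - t) * (exp M * (1 + (Y - M))) = exp M)
    by (unfold M; ring).
  nra.
Qed.

Lemma exp_convex_le (t X Y : R) : 0 < t < 1 ->
  exp (t * X + (1 - t) * Y) <= t * exp X + (1 - t) * exp Y.
Proof.
  intros Ht. destruct (Req_dec X Y) as [<- | HXY].
  - right. replace (t * X + (1 - t) * X) with X by ring. ring.
  - left. now apply exp_convex_lt.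
Qed.

Definition strict_log_convex (f : R -> R) : Prop :=
  forall x y t, 0 < x -> 0 < y -> x <> y -> 0 < t < 1 ->
    ln (f (t * x + (1 - t) * y)) < t * ln (f x) + (1 - t) * ln (f y).

Lemma gamma_integrand_interpolate (s1 s2 t u v x : R) :
  t * exp (- u) * gamma_integrand s1 x + (1 - t) * exp (- v) * gamma_integrand s2 x
  - exp (- (t * u + (1 - t) * v)) * gamma_integrand (t * s1 + (1 - t) * s2) x
  = t * exp ((s1 - 1) * ln x - x - u) + (1 - t) * exp ((s2 - 1) * ln x - x - v)
    - exp (t * ((s1 - 1) * ln x - x - u) + (1 - t) * ((s2 - 1) * ln x - x - v)).
Proof.
  unfold gamma_integrand, Rpower.
  replace (t * ((s1 - 1) * ln x - x - u) + (1 - t) * ((s2 - 1) * ln x - x - v))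
    with ((t * s1 + (1 - t) * s2 - 1) * ln x + - x + - (t * u + (1 - t) * v)) by ring.
  unfold Rminus. rewrite !exp_plus. ring.
Qed.

Lemma Rmult_ln_neq (alpha c x : R) : alpha <> 0 -> exp (c / alpha) < x -> alpha * ln x <> c.
Proof.
  intros Halpha Hx E.
  apply ln_increasing in Hx; [| apply exp_pos]. rewrite ln_exp in Hx.
  rewrite <- E in Hx. field_simplify in Hx; auto. lra.
Qed.

Lemma Gamma_strict_log_convex : strict_log_convex Gamma.
Proof.
  intros s1 s2 t H1 H2 H12 Ht.
  set (s := t * s1 + (1 - t) * s2). assert (Hs : 0 < s) by (unfold s; nra).
  set (lA := ln (Gamma s1)). set (lB := ln (Gamma s2)).
  set (K := t * lA + (1 - t) * lB).
  set (X := fun x => (s1 - 1) * ln x - x - lA).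
  set (Y := fun x => (s2 - 1) * ln x - x - lB).
  (* h is nonnegative by convexity of exp and integrates to 1 - Gamma s / exp K *)
  set (h := fun x => t * exp (- lA) * gamma_integrand s1 x + (1 - t) * exp (- lB) *
                     gamma_integrand s2 x - exp (- K) * gamma_integrand s x).
  assert (Hform : forall x, h x = t * exp (X x) + (1 - t) * exp (Y x)
                                  - exp (t * X x + (1 - t) * Y x))
    by (intros x; apply gamma_integrand_interpolate).
  assert (Hh : is_RInt_gen h (at_right 0) (Rbar_locally p_infty) (1 - exp (- K) * Gamma s)).
  { replace 1 with (t * exp (- lA) * Gamma s1 + (1 - t) * exp (- lB) * Gamma s2).
    - exact (is_RInt_gen_minus _ _ _ _
        (is_RInt_gen_plus _ _ _ _ (is_RInt_gen_scal _ _ _ (is_RInt_gen_Gamma s1 H1))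
                                   (is_RInt_gen_scal _ _ _ (is_RInt_gen_Gamma s2 H2)))
        (is_RInt_gen_scal _ _ _ (is_RInt_gen_Gamma s Hs))).
    - unfold lA, lB. rewrite !exp_Ropp, !exp_ln by (apply Gamma_pos; auto). field.
      split; apply Rgt_not_eq, Gamma_pos; auto. }
  (* X x = Y x only when (s1 - s2) ln x = lA - lB, i.e. at most at x0 *)
  set (x0 := exp ((lA - lB) / (s1 - s2))). assert (Hx0 : 0 < x0) by apply exp_pos.
  assert (Hpos : 0 < 1 - exp (- K) * Gamma s).
  { apply (is_RInt_gen_gt_0 h _ (x0 + 1) (x0 + 2)); auto; try lra.
    - intros x Hx. rewrite Hform. pose proof (exp_convex_le t (X x) (Y x) Ht). lra.
    - intros x Hx. apply (ex_derive_continuous (K := R_AbsRing) (V := R_NormedModule)).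
      unfold h, gamma_integrand, Rpower. auto_derive. lra.
    - intros x Hx. rewrite Hform.
      assert (HXY : X x <> Y x).
      { intros E. apply (Rmult_ln_neq (s1 - s2) (lA - lB) x); [lra | fold x0; lra |].
        unfold X, Y in E. lra. }
      pose proof (exp_convex_lt t (X x) (Y x) Ht HXY). lra. }
  assert (HG : Gamma s < exp K).
  { rewrite exp_Ropp in Hpos. pose proof (exp_pos K).
    apply (Rmult_lt_reg_l (/ exp K)); [apply Rinv_0_lt_compat; lra |].
    rewrite Rinv_l by lra. lra. }
  rewrite <- (ln_exp K). apply ln_increasing; auto using Gamma_pos.
Qed.

Lemma Rplus_lt_of_Rmult_lt (x1 x2 y1 y2 : R) :
  0 < x1 -> 0 < x2 -> x1 <= y2 -> x2 <= y2 -> x1 * x2 < y1 * y2 -> x1 + x2 < y1 + y2.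
Proof.
  intros Hx1 Hx2 H1 H2 Hmul.
  (* (y2 - x1) (y2 - x2) >= 0 gives y2 (x1 + x2) <= y2^2 + x1 x2 < y2 (y1 + y2) *)
  assert (0 <= (y2 - x1) * (y2 - x2)) by nra.
  apply (Rmult_lt_reg_l y2); nra.
Qed.

Section StrictLogConvex.

Variable f : R -> R.
Hypothesis f_pos : forall x, 0 < x -> 0 < f x.
Hypothesis f_slc : strict_log_convex f.

Lemma strict_log_convex_shift_lt (p q h : R) : 0 < p -> p < q -> 0 < h ->
  f (p + h) * f q < f (q + h) * f p.
Proof.
  intros Hp Hpq Hh.
  (* p + h and q are the convex combinations of p and q + h with weights l and 1 - l *)
  set (l := (q - p) / (q - p + h)).
  assert (Hl : 0 < l < 1).
  { unfold l. split; [apply Rdiv_lt_0_compat; lra |].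
    apply Rmult_lt_reg_r with (q - p + h); [lra |].
    unfold Rdiv. rewrite Rmult_assoc, Rinv_l; lra. }
  assert (L1 := f_slc p (q + h) l Hp ltac:(lra) ltac:(lra) Hl).
  assert (L2 := f_slc p (q + h) (1 - l) Hp ltac:(lra) ltac:(lra) ltac:(lra)).
  replace (l * p + (1 - l) * (q + h)) with (p + h) in L1 by (unfold l; field; lra).
  replace ((1 - l) * p + (1 - (1 - l)) * (q + h)) with q in L2 by (unfold l; field; lra).
  apply ln_lt_inv.
  - apply Rmult_lt_0_compat; apply f_pos; lra.
  - apply Rmult_lt_0_compat; apply f_pos; lra.
  - rewrite !ln_mult by (apply f_pos; lra). lra.
Qed.

Lemma strict_log_convex_exchange_lt_le (a b d K J : R) :
  0 < a -> a < b -> 0 < d -> 0 <= K -> K <= J ->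
  f (a + d + K) * f (b + J) + f (a + d + J) * f (b + K) <
  f (b + d + K) * f (a + J) + f (b + d + J) * f (a + K).
Proof.
  intros Ha Hab Hd HK HKJ.
  assert (Hf : forall x, 0 <= x -> 0 < f (a + x) /\ 0 < f (b + x) /\
                                0 < f (a + d + x) /\ 0 < f (b + d + x)).
  { intros x Hx. repeat split; apply f_pos; lra. }
  destruct (Hf K HK) as [FaK [FbK [FadK FbdK]]].
  destruct (Hf J ltac:(lra)) as [FaJ [FbJ [FadJ FbdJ]]].
  pose proof (strict_log_convex_shift_lt (a + K) (b + J) d ltac:(lra) ltac:(lra) Hd) as S1.
  pose proof (strict_log_convex_shift_lt (a + K) (a + d + J) (b - a)
                ltac:(lra) ltac:(lra) ltac:(lra)) as S2.
  pose proof (strict_log_convex_shift_lt (a + K) (b + K) d ltac:(lra) ltac:(lra) Hd) as S3.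
  pose proof (strict_log_convex_shift_lt (a + J) (b + J) d ltac:(lra) ltac:(lra) Hd) as S4.
  replace (a + K + d) with (a + d + K) in S1, S3 by ring.
  replace (b + J + d) with (b + d + J) in S1, S4 by ring.
  replace (a + K + (b - a)) with (b + K) in S2 by ring.
  replace (a + d + J + (b - a)) with (b + d + J) in S2 by ring.
  replace (b + K + d) with (b + d + K) in S3 by ring.
  replace (a + J + d) with (a + d + J) in S4 by ring.
  apply Rplus_lt_of_Rmult_lt; try (apply Rmult_lt_0_compat; assumption); try lra.
  replace (f (b + d + K) * f (a + J) * (f (b + d + J) * f (a + K)))
    with ((f (b + d + K) * f (a + K)) * (f (b + d + J) * f (a + J))) by ring.
  replace (f (a + d + K) * f (b + J) * (f (a + d + J) * f (b + K)))
    with ((f (a + d + K) * f (b + K)) * (f (a + d + J) * f (b + J))) by ring.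
  apply Rmult_le_0_lt_compat; try assumption; left; apply Rmult_lt_0_compat; assumption.
Qed.

Lemma strict_log_convex_exchange_lt (a b d K J : R) :
  0 < a -> a < b -> 0 < d -> 0 <= K -> 0 <= J ->
  f (a + d + K) * f (b + J) + f (a + d + J) * f (b + K) <
  f (b + d + K) * f (a + J) + f (b + d + J) * f (a + K).
Proof.
  intros Ha Hab Hd HK HJ. destruct (Rle_dec K J).
  - now apply strict_log_convex_exchange_lt_le.
  - pose proof (strict_log_convex_exchange_lt_le a b d J K Ha Hab Hd HJ ltac:(lra)). lra.
Qed.

Lemma cauchy_coef_shift_lt (w : nat -> R) (a b d : R) (m : nat) :
  (forall n, 0 < w n) -> 0 < a -> a < b -> 0 < d ->
  cauchy_coef (fun n => w n * f (a + d + INR n)) (fun n => w n * f (b + INR n)) m <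
  cauchy_coef (fun n => w n * f (b + d + INR n)) (fun n => w n * f (a + INR n)) m.
Proof.
  intros Hw Ha Hab Hd. unfold cauchy_coef. apply Rlt_0_minus. rewrite <- minus_sum.
  set (D := fun k => w k * f (b + d + INR k) * (w (m - k)%nat * f (a + INR (m - k))) -
                     w k * f (a + d + INR k) * (w (m - k)%nat * f (b + INR (m - k)))).
  assert (Hpair : 2 * sum_f_R0 D m = sum_f_R0 (fun k => D k + D (m - k)%nat) m)
    by (rewrite plus_sum, sum_f_R0_skip; ring).
  enough (0 < sum_f_R0 (fun k => D k + D (m - k)%nat) m) by (fold D; lra).
  apply tech1. intros k Hk. unfold D.
  replace (m - (m - k))%nat with k by lia.
  pose proof (strict_log_convex_exchange_lt a b d (INR k) (INR (m - k))
                Ha Hab Hd (pos_INR _) (pos_INR _)).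
  pose proof (Rmult_lt_0_compat _ _ (Hw k) (Hw (m - k)%nat)).
  nra.
Qed.

End StrictLogConvex.

Lemma Series_lt_Series (u v : nat -> R) :
  (forall n, 0 <= u n <= v n) -> u 0%nat < v 0%nat -> ex_series u -> ex_series v ->
  Series u < Series v.
Proof.
  intros Hle H0 Hu Hv. rewrite (Series_incr_1 u Hu), (Series_incr_1 v Hv).
  enough (Series (fun k => u (S k)) <= Series (fun k => v (S k))) by lra.
  apply Series_le; auto. now apply (ex_series_incr_1 v).
Qed.

Lemma Series_pos (u : nat -> R) : (forall n, 0 < u n) -> ex_series u -> 0 < Series u.
Proof.
  intros Hu Hex. rewrite <- (Rmult_0_l (Series u)), <- Series_scal_l.
  apply Series_lt_Series; auto.
  - intros n. rewrite Rmult_0_l. split; [lra | left; auto].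
  - rewrite Rmult_0_l. auto.
  - now apply (ex_series_scal_l (V := R_NormedModule)).
Qed.

Lemma exp_ln_minus (x y : R) : 0 < x -> 0 < y -> exp (ln x - ln y) = x / y.
Proof. intros Hx Hy. rewrite <- ln_div, exp_ln; auto. now apply Rdiv_lt_0_compat. Qed.

Lemma Series_strict_log_convex (u : R -> nat -> R) :
  (forall a n, 0 < a -> 0 < u a n) ->
  (forall a, 0 < a -> ex_series (u a)) ->
  (forall n, strict_log_convex (fun a => u a n)) ->
  strict_log_convex (fun a => Series (u a)).
Proof.
  intros Hpos Hex Hslc a1 a2 t H1 H2 H12 Ht.
  set (s := t * a1 + (1 - t) * a2). assert (Hs : 0 < s) by (unfold s; nra).
  set (A := Series (u a1)). set (B := Series (u a2)).
  assert (HA : 0 < A) by (apply Series_pos; auto).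
  assert (HB : 0 < B) by (apply Series_pos; auto).
  set (K := t * ln A + (1 - t) * ln B).
  (* Hoelder: the normalised terms u a1 n / A and u a2 n / B are combined by Young *)
  set (v := fun n => exp K * t / A * u a1 n + exp K * (1 - t) / B * u a2 n).
  assert (Hlt : forall n, u s n < v n).
  { intros n.
    assert (P1 := Hpos a1 n H1). assert (P2 := Hpos a2 n H2).
    specialize (Hslc n a1 a2 t H1 H2 H12 Ht). simpl in Hslc. fold s in Hslc.
    set (X := ln (u a1 n) - ln A). set (Y := ln (u a2 n) - ln B).
    apply Rlt_le_trans with (exp K * exp (t * X + (1 - t) * Y)).
    - rewrite <- exp_plus, <- (exp_ln (u s n)) by auto. apply exp_increasing.
      unfold K, X, Y. lra.
    - pose proof (exp_convex_le t X Y Ht) as Hconv.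
      unfold X, Y in Hconv. rewrite !exp_ln_minus in Hconv by auto.
      apply Rle_trans with (exp K * (t * (u a1 n / A) + (1 - t) * (u a2 n / B))).
      + apply Rmult_le_compat_l; [left; apply exp_pos | exact Hconv].
      + right. unfold v. field. lra. }
  assert (Hexv : ex_series v).
  { apply (ex_series_plus (K := R_AbsRing) (V := R_NormedModule));
      apply (ex_series_scal_l (V := R_NormedModule)); auto. }
  assert (HSv : Series v = exp K).
  { unfold v. rewrite Series_plus, !Series_scal_l
      by (apply (ex_series_scal_l (V := R_NormedModule)); auto).
    fold A B. field. lra. }
  assert (HSs : Series (u s) < exp K).
  { rewrite <- HSv. apply Series_lt_Series; auto.
    intros n. split; left; auto. }
  rewrite <- (ln_exp K). apply ln_increasing; auto.
  apply Series_pos; auto.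
Qed.

Lemma strict_log_convex_scale_shift (f : R -> R) (c k : R) :
  (forall x, 0 < x -> 0 < f x) -> 0 < c -> 0 <= k ->
  strict_log_convex f -> strict_log_convex (fun a => c * f (a + k)).
Proof.
  intros Hf Hc Hk Hslc x y t Hx Hy Hxy Ht. simpl.
  replace (t * x + (1 - t) * y + k) with (t * (x + k) + (1 - t) * (y + k)) by ring.
  rewrite !ln_mult by (auto; apply Hf; nra).
  pose proof (Hslc (x + k) (y + k) t ltac:(lra) ltac:(lra) ltac:(lra) Ht). nra.
Qed.

Lemma gcoef_pos (g : nat -> R) (a : R) (n : nat) :
  (forall n, 0 < g n) -> 0 < a -> 0 < gcoef g a n.
Proof.
  intros Hg Ha. apply Rmult_lt_0_compat; auto.
  apply Gamma_pos. pose proof (pos_INR n). lra.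
Qed.

Lemma gcoef_strict_log_convex (g : nat -> R) (x : R) (n : nat) :
  (forall n, 0 < g n) -> 0 < x -> strict_log_convex (fun a => gcoef g a n * x ^ n).
Proof.
  intros Hg Hx.
  replace (fun a => gcoef g a n * x ^ n) with (fun a => g n * x ^ n * Gamma (a + INR n))
    by (apply functional_extensionality; intros a; unfold gcoef; ring).
  apply strict_log_convex_scale_shift; auto using Gamma_pos, Gamma_strict_log_convex, pos_INR.
  apply Rmult_lt_0_compat; auto using pow_lt.
Qed.

Theorem theorem2 (g : nat -> R) (hg : forall n, 0 < g n) :
  (forall (a b d : R), 0 < a -> a < b -> 0 < d ->
     forall m : nat, psi_coef g a b d m < 0)
  /\
  (forall x : R, 0 < x ->
     (forall a, 0 < a -> ex_series (fun n => gcoef g a n * x ^ n)) ->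
     forall a1 a2 t : R, 0 < a1 -> a1 < a2 -> 0 < t < 1 ->
       ln (gval g (t * a1 + (1 - t) * a2) x)
       < t * ln (gval g a1 x) + (1 - t) * ln (gval g a2 x)).
Proof.
  split.
  - intros a b d Ha Hab Hd m. unfold psi_coef.
    pose proof (cauchy_coef_shift_lt Gamma Gamma_pos Gamma_strict_log_convex
                  g a b d m hg Ha Hab Hd).
    unfold gcoef. lra.
  - intros x Hx Hex a1 a2 t H1 H12 Ht.
    apply (Series_strict_log_convex (fun a n => gcoef g a n * x ^ n)); auto; try lra.
    + intros a n Ha. apply Rmult_lt_0_compat; auto using gcoef_pos, pow_lt.
    + intros n. now apply gcoef_strict_log_convex.
Qed.
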